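(* Let $\mathbb{F}\in\{\mathbb{R},\mathbb{C}\}$, let $A$ be an $n\times m$ matrix over $\mathbb{F}$, let $\rho=\|A\|_{1,\infty}$ be the largest absolute value of the entries of $A$, and suppose every entry of $A$ of absolute value $\rho$ is the only nonzero element of its row and of its column. Let $C$ be obtained from $A$ by replacing all entries of absolute value $\rho$ by $0$ (so $\|C\|_{1,\infty}<\rho$). If $p\in(1,\infty]$ and $q\in[1,\infty)$ satisfy $p\le q$ and $$m^{1-(1/p)}\,n^{1/q}\,\|C\|_{1,\infty}\le\rho,$$ then $A\in\mathcal{E}_{1,\infty}(p,q)$. This inequality is satisfied if $p$ is sufficiently close to $1$ and $q$ is sufficiently large.
   Context: $\|x\|_p$ is the Hölder $\ell_p$ norm; $\|A\|_{p,q}=\max_{x\in\mathbb{F}^m,x\ne0}\|Ax\|_q/\|x\|_p$ (for real $A$ one may use $\mathbb{F}=\mathbb{R}$ or $\mathbb{C}$); $1/\infty=0$. For $p\in(1,\infty]$, $q\in[1,\infty)$, $\mathcal{E}_{1,\infty}(p,q)$ is the set of $n\times m$ matrices $A$ with $\|A\|_{r,s}=\|A\|_{p,q}$ for all $r\in[1,p)$ and $s\in(q,\infty]$. *)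

From mathcomp Require Import all_boot all_order all_algebra.
From mathcomp Require Import all_classical all_reals all_analysis.
From mathcomp Require Import complex.
Set Implicit Arguments. Unset Strict Implicit. Unset Printing Implicit Defensive.
Import Order.TTheory GRing.Theory Num.Theory.
Local Open Scope ring_scope.
Local Open Scope classical_set_scope.

(* Exponents p live in the extended reals \bar R (p = +oo allowed).
   1/p as a real number, with the convention 1/+oo = 0. *)
Definition einv (R : realType) (p : \bar R) : R :=
  match p with EFin r => r^-1 | _ => 0 end.

(* Hölder l_p norm of the vector of absolute values v = (|x_1|,...,|x_k|):
   (\sum_i v_i^p)^(1/p) for finite p, max_i v_i for p = +oo.
   (The value for p = -oo is irrelevant and never used.) *)
Definition lpnorm (R : realType) (k : nat) (p : \bar R) (v : 'I_k -> R) : R :=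
  match p with
  | EFin r => (\sum_(i < k) v i `^ r) `^ r^-1
  | _ => \big[Num.max/0]_(i < k) v i
  end.

(* Operator norm ||A||_{p,q} = max_{x <> 0} ||Ax||_q / ||x||_p over F^m,
   where ab : F -> R is the absolute value of the scalar field F.
   (The max is attained, so it is written as a supremum.) *)
Definition opnorm (R : realType) (F : pzRingType) (ab : F -> R) (n m : nat)
  (A : 'M[F]_(n, m)) (p q : \bar R) : R :=
  sup [set lpnorm q (fun i => ab ((A *m x) i 0)) / lpnorm p (fun j => ab (x j 0))
      | x in [set x : 'cV[F]_m | x != 0]].

Definition E1inf (R : realType) (F : pzRingType) (ab : F -> R) (n m : nat)
  (p : \bar R) (q : R) (A : 'M[F]_(n, m)) : Prop :=
  forall (r : R) (s : \bar R), 1 <= r -> (r%:E < p)%E -> (q%:E < s)%E ->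
    opnorm ab A r%:E s = opnorm ab A p q%:E.

Definition absR (R : realType) (x : R) : R := `|x|.
Definition absC (R : realType) (z : R[i]) : R := Normc.normc z.

Definition dropmax (R : realType) (F : pzRingType) (ab : F -> R) (n m : nat)
  (A : 'M[F]_(n, m)) (rho : R) : 'M[F]_(n, m) :=
  \matrix_(i, j) (if ab (A i j) == rho then 0 else A i j).

Definition Thm6 (R : realType) (F : pzRingType) (ab : F -> R) (n m : nat)
  (A : 'M[F]_(n, m)) : Prop :=
  let rho := opnorm ab A 1%:E +oo%E in
  let C := dropmax ab A rho in
  (forall i j, ab (A i j) = rho ->
     (forall j', j' != j -> A i j' = 0) /\ (forall i', i' != i -> A i' j = 0)) ->
  (forall (p : \bar R) (q : R), (1%:E < p)%E -> 1 <= q -> (p <= q%:E)%E ->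
     (m%:R) `^ (1 - einv p) * (n%:R) `^ (q^-1) * opnorm ab C 1%:E +oo%E <= rho ->
     E1inf ab p q A)
  /\
  (exists p0 : R, 1 < p0 /\ exists q0 : R,
     forall p q : R, 1 < p -> p <= p0 -> q0 <= q ->
       (m%:R) `^ (1 - p^-1) * (n%:R) `^ (q^-1) * opnorm ab C 1%:E +oo%E <= rho).

From mathcomp Require Import all_boot all_order all_algebra.
From mathcomp Require Import all_classical all_reals all_analysis.
From mathcomp Require Import complex.
Set Implicit Arguments. Unset Strict Implicit. Unset Printing Implicit Defensive.
Import Order.TTheory GRing.Theory Num.Theory.
Local Open Scope ring_scope.

(* Let rho = ||A||_{1,oo} and c = ||C||_{1,oo}, and call a column maximal if it
   contains an entry of absolute value rho.  The unit vector of a maximal column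
   is mapped to a vector whose only nonzero entry is rho, so ||A||_{r,s} >= rho.
   Conversely, split x into its part v on the maximal columns and the rest w.
   A row containing an entry rho contributes rho |x_j| for a single maximal j,
   distinct rows giving distinct j; every other row is bounded by
   c ||w||_1 <= c m^(1-1/r) ||w||_r.  Hence, for r <= s,
     ||Ax||_s^s <= rho^s ||v||_s^s + n (c m^(1-1/r) ||w||_r)^s
                <= rho^s (||v||_r^s + ||w||_r^s) <= rho^s ||x||_r^s
   as soon as m^(1-1/r) n^(1/s) c <= rho.  This condition only gets weaker as r
   decreases and s increases, so for r < p <= q < s both ||A||_{r,s} and
   ||A||_{p,q} equal rho.  Since c < rho, it holds for p close to 1 and q large. *)

Section PowerSums.
Context (R : realType).

Lemma powRV (x r : R) : 0 <= x -> x^-1 `^ r = (x `^ r)^-1.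
Proof. by move=> x0; rewrite -powR_inv1 // -powRrM mulN1r powRN. Qed.

Lemma powRK (r x : R) : r != 0 -> 0 <= x -> (x `^ r) `^ r^-1 = x.
Proof. by move=> r0 x0; rewrite -powRrM mulfV // powRr1. Qed.

Lemma powRVK (r x : R) : r != 0 -> 0 <= x -> (x `^ r^-1) `^ r = x.
Proof. by move=> r0 x0; rewrite -powRrM mulVf // powRr1. Qed.

Lemma powRV_le (s x y : R) : 0 < s -> 0 <= x -> 0 <= y -> x <= y `^ s ->
  x `^ s^-1 <= y.
Proof.
move=> s0 x0 y0 le_xy; rewrite -(powRK (lt0r_neq0 s0) y0).
by rewrite ge0_ler_powR ?nnegrE ?invr_ge0 ?powR_ge0 ?(ltW s0).
Qed.

Lemma sum_powR_le (I : finType) (t : R) (a : I -> R) :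
  1 <= t -> (forall i, 0 <= a i) -> \sum_i a i `^ t <= (\sum_i a i) `^ t.
Proof.
move=> t1 a0; have t_neq0 : t != 0 by rewrite gt_eqF // (lt_le_trans ltr01).
have [S_eq0|S_neq0] := eqVneq (\sum_i a i) 0.
  rewrite S_eq0 powR0 // big1 // => i _.
  by rewrite (psumr_eq0P _ S_eq0) ?powR0.
set S := \sum_i a i in S_neq0 *.
have S_gt0 : 0 < S by rewrite lt0r S_neq0 sumr_ge0.
have le_ai i : a i `^ t <= a i / S * S `^ t.
  have [->|ai_neq0] := eqVneq (a i) 0; first by rewrite powR0 // !mul0r.
  rewrite -{1}(divfK S_neq0 (a i)); apply: ge1r_powRZ => //; last exact: ltW.
  rewrite divr_gt0 ?S_gt0 ?lt0r ?ai_neq0 ?a0 //= ler_pdivrMr // mul1r.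
  by rewrite /S (bigD1 i) //= lerDl sumr_ge0.
apply: le_trans (ler_sum _ (fun i _ => le_ai i)) _.
by rewrite -mulr_suml -mulr_suml mulfV // mul1r.
Qed.

Lemma add_powR_le (t a b : R) : 1 <= t -> 0 <= a -> 0 <= b ->
  a `^ t + b `^ t <= (a + b) `^ t.
Proof.
move=> t1 a0 b0; pose f (x : bool) := if x then a else b.
have := @sum_powR_le _ t f t1; rewrite !big_bool /=.
by apply; case.
Qed.

Lemma sum_le_card_powR_sum (I : finType) (r : R) (w : I -> R) :
  1 <= r -> (forall j, 0 <= w j) ->
  \sum_j w j <= #|I|%:R `^ (1 - r^-1) * (\sum_j w j `^ r) `^ r^-1.
Proof.
move=> r1 w0; have r0 : 0 < r := lt_le_trans ltr01 r1.
have [->|r_neq1] := eqVneq r 1.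
  rewrite invr1 subrr powRr0 mul1r powRr1 ?sumr_ge0 // => [|j _]; last first.
    exact: powR_ge0.
  by under [X in _ <= X]eq_bigr => j _ do rewrite powRr1 //.
have r_gt1 : 1 < r by rewrite lt_neqAle eq_sym r_neq1.
set X := \sum_j w j `^ r.
have [X_eq0|X_neq0] := eqVneq X 0.
  have w_eq0 j : w j = 0.
    exact/(@powR_eq0_eq0 _ _ r)/(psumr_eq0P (fun i _ => powR_ge0 _ _) X_eq0).
  by rewrite big1 ?mulr_ge0 ?powR_ge0.
have X_gt0 : 0 < X by rewrite lt0r X_neq0 sumr_ge0 // => j _; exact: powR_ge0.
have k_gt0 : (0 < #|I|)%N.
  rewrite lt0n; apply: contraNneq X_neq0 => /card0_eq I0.
  by rewrite /X big1 // => j _; move: (I0 j); rewrite !inE.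
(* Young's inequality for the conjugate exponent q, applied to w j / U and 1 / K
   where U = ||w||_r and K ^ q = #|I|, summed over j. *)
set q := r / (r - 1).
have qV : q^-1 = 1 - r^-1 by rewrite /q invf_div mulrBl divff ?gt_eqF // mul1r.
have q0 : 0 < q by rewrite divr_gt0 // subr_gt0.
have rq : r^-1 + q^-1 = 1 by rewrite qV addrC subrK.
set U := X `^ r^-1; set K := #|I|%:R `^ q^-1.
have U_gt0 : 0 < U by apply: powR_gt0.
have K_gt0 : 0 < K by apply: powR_gt0; rewrite ltr0n.
have UrE : U `^ r = X by rewrite powRVK ?gt_eqF ?(ltW X_gt0).
have KqE : K `^ q = #|I|%:R by rewrite powRVK ?gt_eqF.
have young j : w j / U * K^-1 <= w j `^ r / X / r + #|I|%:R^-1 / q.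
  have := @conjugate_powR R (w j / U) K^-1 r q.
  have [U0 K0] := (ltW U_gt0, ltW K_gt0).
  rewrite powRM ?invr_ge0 // !powRV // UrE KqE.
  by apply; rewrite ?divr_ge0 ?invr_ge0.
have : \sum_j w j / U * K^-1 <= 1.
  apply: le_trans (ler_sum _ (fun j _ => young j)) _.
  rewrite big_split /= -!mulr_suml -/X mulfV ?gt_eqF // mul1r.
  by rewrite sumr_const -(mulr_natr _^-1) mulVf ?pnatr_eq0 -?lt0n // mul1r rq.
by rewrite -!mulr_suml ler_pdivrMr // ler_pdivrMr // mul1r /K qV.
Qed.

End PowerSums.

Section LpNorm.
Context (R : realType) (k : nat).
Implicit Types (p : \bar R) (v : 'I_k -> R).

Lemma lpnorm_ge0 p v : 0 <= lpnorm p v.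
Proof. by case: p => [r||] /=; [exact: powR_ge0 | exact: bigmax_ge_id ..]. Qed.

Lemma lpnorm1E v : (forall i, 0 <= v i) -> lpnorm 1%:E v = \sum_i v i.
Proof.
move=> v0 /=; rewrite invr1 powRr1 ?sumr_ge0 // => [|i _]; last exact: powR_ge0.
by apply: eq_bigr => i _; rewrite powRr1.
Qed.

Lemma lpnorm_eq0 p v : (0 < p)%E -> v =1 (fun=> 0) -> lpnorm p v = 0.
Proof.
case: p => [r||] //= r0 v0; last by apply: bigmax_eq_id => i _; rewrite v0.
by rewrite big1 ?powR0 ?invr_eq0 ?gt_eqF // => i _; rewrite v0 powR0 ?gt_eqF.
Qed.

Lemma lpnorm_delta p (c : R) (i0 : 'I_k) : (0 < p)%E -> 0 <= c ->
  lpnorm p (fun i => if i == i0 then c else 0) = c.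
Proof.
case: p => [r||] //= r0 c0.
  rewrite (bigD1 i0) //= eqxx big1 ?addr0 => [|i /negbTE ->]; last first.
    by rewrite powR0 ?gt_eqF.
  by rewrite powRK ?gt_eqF.
apply/le_anti/andP; split; first by apply: bigmax_le => // i _; case: ifP.
by apply: le_trans (le_bigmax _ _ i0); rewrite eqxx.
Qed.

Lemma le_lpnorm p v j : (0 < p)%E -> (forall i, 0 <= v i) -> v j <= lpnorm p v.
Proof.
case: p => [r||] //= r0 v0; last exact: le_bigmax.
rewrite lte_fin in r0.
have powr_ge0 i : 0 <= v i `^ r by exact: powR_ge0.
rewrite -[leLHS](powRK (lt0r_neq0 r0) (v0 j)).
rewrite ge0_ler_powR ?nnegrE ?invr_ge0 ?(ltW r0) ?sumr_ge0 //.
by rewrite (bigD1 j) //= lerDl sumr_ge0.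
Qed.

End LpNorm.

Section MaxEntries.
Context (R : realType) (n m : nat) (a : 'I_n -> 'I_m -> R) (rho c : R).
Hypotheses (rho_gt0 : 0 < rho) (c_ge0 : 0 <= c)
  (max_row0 : forall i j j', a i j = rho -> j' != j -> a i j' = 0)
  (max_col0 : forall i j i', a i j = rho -> i' != i -> a i' j = 0)
  (le_c : forall i j, a i j != rho -> a i j <= c).

Definition maxcol j := [exists i, a i j == rho].
Definition on_maxcol (u : 'I_m -> R) j := if maxcol j then u j else 0.
Definition off_maxcol (u : 'I_m -> R) j := if maxcol j then 0 else u j.

Lemma row_sum_cases (u : 'I_m -> R) i : (forall j, 0 <= u j) ->
  (exists2 j, a i j = rho & \sum_k a i k * u k = rho * u j) \/
  \sum_k a i k * u k <= c * \sum_k off_maxcol u k.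
Proof.
move=> u0; case: (pickP (fun j => a i j == rho)) => [j /eqP aij | no_max].
  left; exists j => //; rewrite (bigD1 j) //= big1 ?addr0 ?aij // => k kj.
  by rewrite (max_row0 aij kj) mul0r.
right; rewrite mulr_sumr; apply: ler_sum => k _; rewrite /off_maxcol.
case: ifPn => [/existsP[i' /eqP ai'k] | no_maxk].
  have i_neq : i != i' by apply: contraFneq (no_max k) => ->; rewrite ai'k eqxx.
  by rewrite (max_col0 ai'k i_neq) mul0r mulr0.
rewrite ler_wpM2r // le_c //; apply: contra no_maxk => aik.
by apply/existsP; exists i.
Qed.

Lemma sum_maxcol (x : R) j :
  \sum_i (if a i j == rho then x else 0) = if maxcol j then x else 0.
Proof.
case: ifPn => [/existsP[i0 /eqP ai0j] | /existsPn no_max].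
  rewrite (bigD1 i0) ?ai0j ?eqxx //= big1 ?addr0 // => i ii0.
  by rewrite (max_col0 ai0j ii0) eq_sym gt_eqF.
by apply: big1 => i _; rewrite (negbTE (no_max i)).
Qed.

Lemma sum_powR_rows_le (s : R) (u : 'I_m -> R) (y : 'I_n -> R) : 0 < s ->
  (forall j, 0 <= u j) -> (forall i, 0 <= y i) ->
  (forall i, y i <= \sum_j a i j * u j) ->
  \sum_i y i `^ s <= rho `^ s * \sum_j on_maxcol u j `^ s +
                     n%:R * (c * \sum_j off_maxcol u j) `^ s.
Proof.
move=> s0 u0 y0 le_y; have s_neq0 := lt0r_neq0 s0.
set S := \sum_j off_maxcol u j.
have S0 : 0 <= S by apply: sumr_ge0 => j _; rewrite /off_maxcol; case: ifP.
have term_ge0 i j : 0 <= if a i j == rho then (rho * u j) `^ s else 0.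
  by case: ifP => // _; exact: powR_ge0.
have le_row i : y i `^ s <=
    \sum_j (if a i j == rho then (rho * u j) `^ s else 0) + (c * S) `^ s.
  case: (row_sum_cases i u0) => [[j aij yiE] | le_yi].
    have le_pow : y i `^ s <= (rho * u j) `^ s.
      by rewrite ge0_ler_powR ?nnegrE ?(ltW s0) ?mulr_ge0 ?(ltW rho_gt0) // -yiE.
    apply: (le_trans le_pow); rewrite -[leLHS]addr0 lerD ?powR_ge0 //.
    by rewrite (bigD1 j) ?aij ?eqxx //= lerDl sumr_ge0.
  have le_pow : y i `^ s <= (c * S) `^ s.
    by rewrite ge0_ler_powR ?nnegrE ?mulr_ge0 ?(ltW s0) // (le_trans (le_y i)).
  by apply: (le_trans le_pow); rewrite lerDr sumr_ge0.
apply: le_trans (ler_sum _ (fun i _ => le_row i)) _.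
rewrite big_split /= exchange_big sumr_const card_ord mulr_natl lerD2r.
rewrite mulr_sumr le_eqVlt; apply/orP; left; apply/eqP/eq_bigr => j _.
rewrite (sum_maxcol ((rho * u j) `^ s)) /on_maxcol; case: ifP => _.
  by rewrite powRM ?(ltW rho_gt0).
by rewrite powR0 ?mulr0.
Qed.

Lemma sum_powR_on_off (r : R) (u : 'I_m -> R) : 0 < r ->
  \sum_j on_maxcol u j `^ r + \sum_j off_maxcol u j `^ r = \sum_j u j `^ r.
Proof.
move=> r0; rewrite -big_split /=; apply: eq_bigr => j _.
by rewrite /on_maxcol /off_maxcol; case: ifP; rewrite powR0 ?gt_eqF ?addr0 ?add0r.
Qed.

Lemma off_maxcol_sum_le (r : R) (u : 'I_m -> R) : 1 <= r -> (forall j, 0 <= u j) ->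
  \sum_j off_maxcol u j <= m%:R `^ (1 - r^-1) * (\sum_j off_maxcol u j `^ r) `^ r^-1.
Proof.
move=> r1 u0; have := @sum_le_card_powR_sum R _ r (off_maxcol u) r1.
by rewrite card_ord; apply=> j; rewrite /off_maxcol; case: ifP.
Qed.

Lemma lpnorm_fin_le (r s : R) (u : 'I_m -> R) (y : 'I_n -> R) : 1 <= r -> r <= s ->
  (forall j, 0 <= u j) -> (forall i, 0 <= y i) ->
  (forall i, y i <= \sum_j a i j * u j) ->
  m%:R `^ (1 - r^-1) * n%:R `^ s^-1 * c <= rho ->
  lpnorm s%:E y <= rho * lpnorm r%:E u.
Proof.
move=> r1 rs u0 y0 le_y le_rho.
have r0 : 0 < r := lt_le_trans ltr01 r1; have s0 : 0 < s := lt_le_trans r0 rs.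
have [r_neq0 s_neq0] := (lt0r_neq0 r0, lt0r_neq0 s0).
have rho0 := ltW rho_gt0.
set X := \sum_j on_maxcol u j `^ r; set Y := \sum_j off_maxcol u j `^ r.
set S := \sum_j off_maxcol u j.
have S0 : 0 <= S by apply: sumr_ge0 => j _; rewrite /off_maxcol; case: ifP.
have [X0 Y0] : 0 <= X /\ 0 <= Y by split; apply: sumr_ge0 => j _; exact: powR_ge0.
set t := s / r; have t1 : 1 <= t by rewrite ler_pdivlMr // mul1r.
have powRt x : 0 <= x -> (x `^ r) `^ t = x `^ s.
  by move=> x0; rewrite -powRrM mulrCA mulfV // mulr1.
have le_on : \sum_j on_maxcol u j `^ s <= X `^ t.
  rewrite /X -(eq_bigr _ (fun j _ => powRt _ _)) => [|j]; last first.
    by rewrite /on_maxcol; case: ifP.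
  by apply: sum_powR_le => // j; exact: powR_ge0.
have le_off : n%:R * (c * S) `^ s <= rho `^ s * Y `^ t.
  have N0 : 0 <= n%:R `^ s^-1 :> R by exact: powR_ge0.
  have le_base : n%:R `^ s^-1 * c * S <= rho * Y `^ r^-1.
    apply: le_trans (ler_wpM2l (mulr_ge0 N0 c_ge0) (off_maxcol_sum_le r1 u0)) _.
    by rewrite mulrA ler_wpM2r ?powR_ge0 // mulrAC (mulrC (n%:R `^ _)).
  have -> : n%:R * (c * S) `^ s = (n%:R `^ s^-1 * c * S) `^ s.
    by rewrite -mulrA [RHS]powRM ?mulr_ge0 // powRVK.
  have -> : rho `^ s * Y `^ t = (rho * Y `^ r^-1) `^ s.
    by rewrite [RHS]powRM ?powR_ge0 // -powRrM (mulrC r^-1).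
  by rewrite ge0_ler_powR ?nnegrE ?mulr_ge0 ?powR_ge0 ?(ltW s0).
rewrite /=; apply: powRV_le; rewrite ?mulr_ge0 ?powR_ge0 ?sumr_ge0 //.
  by move=> i _; exact: powR_ge0.
apply: le_trans (sum_powR_rows_le s0 u0 y0 le_y) _.
apply: le_trans (lerD (ler_wpM2l (powR_ge0 _ _) le_on) le_off) _.
have -> : (rho * (\sum_j u j `^ r) `^ r^-1) `^ s = rho `^ s * (X + Y) `^ t.
  by rewrite (sum_powR_on_off u r0) powRM ?powR_ge0 // -powRrM (mulrC r^-1).
by rewrite -mulrDr ler_wpM2l ?powR_ge0 // add_powR_le.
Qed.

Lemma lpnorm_oo_le (r : R) (u : 'I_m -> R) (y : 'I_n -> R) : 1 <= r ->
  (forall j, 0 <= u j) -> (forall i, y i <= \sum_j a i j * u j) ->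
  m%:R `^ (1 - r^-1) * c <= rho ->
  lpnorm +oo%E y <= rho * lpnorm r%:E u.
Proof.
move=> r1 u0 le_y le_rho; have r0 : 0 < r := lt_le_trans ltr01 r1.
have le_off : \sum_j off_maxcol u j <= m%:R `^ (1 - r^-1) * lpnorm r%:E u.
  have sum_off_le : \sum_j off_maxcol u j `^ r <= \sum_j u j `^ r.
    by rewrite -(sum_powR_on_off u r0) lerDr sumr_ge0 // => j _; exact: powR_ge0.
  rewrite /=; apply: le_trans (off_maxcol_sum_le r1 u0) _.
  apply: ler_wpM2l; first exact: powR_ge0.
  by rewrite ge0_ler_powR ?nnegrE ?invr_ge0 ?(ltW r0) ?sumr_ge0 // => j _;
    exact: powR_ge0.
apply: bigmax_le => [|i _]; first by rewrite mulr_ge0 ?(ltW rho_gt0) ?lpnorm_ge0.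
apply: le_trans (le_y i) _; case: (row_sum_cases i u0) => [[j _ ->] | le_yi].
  by rewrite ler_wpM2l ?(ltW rho_gt0) ?le_lpnorm.
apply: (le_trans le_yi); apply: le_trans (ler_wpM2l c_ge0 le_off) _.
by rewrite mulrA ler_wpM2r ?lpnorm_ge0 // mulrC.
Qed.

Lemma lpnorm_le_rho (r : R) (s : \bar R) (u : 'I_m -> R) (y : 'I_n -> R) :
  1 <= r -> (r%:E <= s)%E -> (forall j, 0 <= u j) -> (forall i, 0 <= y i) ->
  (forall i, y i <= \sum_j a i j * u j) ->
  m%:R `^ (1 - r^-1) * n%:R `^ einv s * c <= rho ->
  lpnorm s y <= rho * lpnorm r%:E u.
Proof.
case: s => [s||] //= r1 rs u0 y0; first exact: lpnorm_fin_le.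
by rewrite powRr0 mulr1; exact: lpnorm_oo_le.
Qed.

End MaxEntries.

Section Exponents.
Context (R : realType).

Lemma powR_exponents_le (M N r p a b : R) : 1 <= M -> 1 <= N ->
  0 < r -> r <= p -> a <= b ->
  M `^ (1 - r^-1) * N `^ a <= M `^ (1 - p^-1) * N `^ b.
Proof.
move=> M1 N1 r0 rp ab; rewrite ler_pM ?powR_ge0 ?ler_powR //.
by rewrite lerD2l lerN2 lef_pV2 ?posrE // (lt_le_trans r0).
Qed.

Lemma einv_le (q : R) (s : \bar R) : 0 < q -> (q%:E < s)%E -> einv s <= q^-1.
Proof.
case: s => [s||] //= q0; last by rewrite invr_ge0 ltW.
by rewrite lte_fin => qs; rewrite lef_pV2 ?posrE ?ltW // (lt_trans q0 qs).
Qed.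

Lemma powR_exponents_small (M N t : R) : 1 <= M -> 1 <= N -> 1 < t ->
  exists p0 : R, 1 < p0 /\ exists q0 : R, forall p q : R, 1 < p -> p <= p0 ->
    q0 <= q -> M `^ (1 - p^-1) * N `^ q^-1 <= t.
Proof.
move=> M1 N1 t1; have [M0 N0] := (lt_le_trans ltr01 M1, lt_le_trans ltr01 N1).
have MN1 : 1 <= M * N by rewrite -[1]mulr1 ler_pM.
have [L0 l0] : 0 < ln t /\ 0 <= ln (M * N) by split; [exact: ln_gt0 | exact: ln_ge0].
(* Both exponents end up at most d, and (M N) `^ d <= t. *)
set d := ln t / (ln (M * N) + ln t + 1).
have den_gt0 : 0 < ln (M * N) + ln t + 1 by rewrite -addrA ltr_wpDl // addr_gt0.
have d_gt0 : 0 < d by rewrite divr_gt0.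
have d_lt1 : d < 1 by rewrite ltr_pdivrMr // mul1r -addrA ltr_wpDl // ltrDl.
have od_gt0 : 0 < 1 - d by rewrite subr_gt0.
exists (1 - d)^-1; split; first by rewrite invf_gt1 // ltrBlDr ltrDl.
exists d^-1 => p q p1 le_p le_q; have p0 := lt_trans ltr01 p1.
have le_ep : 1 - p^-1 <= d.
  by rewrite lerBlDr -lerBlDl -[1 - d]invrK lef_pV2 ?posrE ?invr_gt0.
have le_eq : q^-1 <= d.
  by rewrite -[d]invrK lef_pV2 ?posrE ?invr_gt0 // (lt_le_trans _ le_q) ?invr_gt0.
apply: (@le_trans _ _ ((M * N) `^ d)).
  by rewrite powRM ?(ltW M0) ?(ltW N0) // ler_pM ?powR_ge0 ?ler_powR.
rewrite -ler_ln ?posrE ?powR_gt0 ?(lt_le_trans ltr01 MN1) ?(lt_trans ltr01 t1) //.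
rewrite ln_powR /d mulrAC ler_pdivrMr // ler_pM2l // -addrA lerDl.
by rewrite addr_ge0 ?ler01 ?ltW.
Qed.

End Exponents.

Lemma sup_eq_max (R : realType) (S : set R) (v : R) :
  (forall x, S x -> x <= v) -> S v -> sup S = v.
Proof.
move=> ub Sv; apply/le_anti; rewrite ge_sup //=; last by exists v.
by rewrite ub_le_sup //; exists v.
Qed.

Section AbsoluteValue.
Context (R : realType) (F : pzRingType) (ab : F -> R).
Hypotheses (ab0 : ab 0 = 0) (ab1 : ab 1 = 1) (ab_ge0 : forall x, 0 <= ab x)
  (abD : forall x y, ab (x + y) <= ab x + ab y)
  (abM : forall x y, ab (x * y) = ab x * ab y)
  (ab_eq0 : forall x, ab x = 0 -> x = 0).

Lemma ab_sum (I : finType) (f : I -> F) : ab (\sum_i f i) <= \sum_i ab (f i).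
Proof.
elim/big_rec2: _ => [|i y1 y2 _ h]; first by rewrite ab0.
exact: le_trans (abD _ _) (lerD (lexx _) h).
Qed.

Lemma ab_mulmx n m (A : 'M[F]_(n, m)) (x : 'cV[F]_m) i :
  ab ((A *m x) i 0) <= \sum_j ab (A i j) * ab (x j 0).
Proof.
rewrite mxE; apply: le_trans (ab_sum _) _.
by apply: ler_sum => j _; rewrite abM.
Qed.

Lemma lpnorm_ab_gt0 m p (x : 'cV[F]_m) : (0 < p)%E -> x != 0 ->
  0 < lpnorm p (fun j => ab (x j 0)).
Proof.
move=> p0; apply: contraNT; rewrite -leNgt => le_lp0.
apply/eqP/matrixP => j k; rewrite (ord1 k) mxE; apply: ab_eq0.
by apply/le_anti; rewrite ab_ge0 andbT (le_trans (le_lpnorm j p0 _) le_lp0).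
Qed.

Lemma opnorm_eq n m (A : 'M[F]_(n, m)) p q (v : R) : (0 < p)%E -> 0 <= v ->
  (forall x : 'cV[F]_m, lpnorm q (fun i => ab ((A *m x) i 0)) <=
     v * lpnorm p (fun j => ab (x j 0))) ->
  (exists2 x : 'cV[F]_m, x != 0 & lpnorm q (fun i => ab ((A *m x) i 0)) =
     v * lpnorm p (fun j => ab (x j 0))) ->
  opnorm ab A p q = v.
Proof.
move=> p0 v0 ub [x0 x0_neq0 x0E]; apply: sup_eq_max => [_ [x /= x_neq0 <-]|].
  by rewrite ler_pdivrMr ?lpnorm_ab_gt0.
by exists x0 => //; rewrite x0E mulfK // gt_eqF // lpnorm_ab_gt0.
Qed.

Lemma opnorm_eq_col n m (A : 'M[F]_(n, m)) p q (v : R) (j0 : 'I_m) :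
  (0 < p)%E -> 0 <= v ->
  (forall x : 'cV[F]_m, lpnorm q (fun i => ab ((A *m x) i 0)) <=
     v * lpnorm p (fun j => ab (x j 0))) ->
  lpnorm q (fun i => ab (A i j0)) = v -> opnorm ab A p q = v.
Proof.
move=> p0 v0 ub col_norm; apply: opnorm_eq => //; exists (delta_mx j0 0).
  apply/negP => /eqP/matrixP/(_ j0 0); rewrite !mxE !eqxx mulr1n => one_eq0.
  by move: ab1; rewrite one_eq0 ab0 => /esym/eqP; rewrite oner_eq0.
have -> : (fun j => ab (delta_mx j0 (0 : 'I_1) j 0)) = fun j => if j == j0 then 1 else 0.
  by apply/funext => j; rewrite mxE eqxx andbT; case: eqP; rewrite ?ab1 ?ab0.
rewrite lpnorm_delta // mulr1 -colE -col_norm.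
by under eq_fun => i do rewrite mxE.
Qed.

Lemma opnorm0 n m p q : (0 < q)%E -> opnorm ab (0 : 'M[F]_(n, m)) p q = 0.
Proof.
move=> q0; rewrite /opnorm; set S := (X in sup X).
have : (S `<=` [set 0])%classic.
  move=> _ [x _ <-] /=; rewrite mul0mx lpnorm_eq0 ?mul0r // => i.
  by rewrite mxE ab0.
by case/subset_set1 => ->; rewrite ?sup0 ?sup1.
Qed.

Lemma opnorm_1oo_max n m (B : 'M[F]_(n, m)) (i : 'I_n) (j : 'I_m) :
  exists i0 j0, opnorm ab B 1%:E +oo%E = ab (B i0 j0) /\
    forall i j, ab (B i j) <= ab (B i0 j0).
Proof.
have [[i0 j0] _ B_max] := @arg_maxP _ _ _ (i, j) predT (fun k => ab (B k.1 k.2)) isT.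
exists i0, j0; split=> [|i' j']; last exact: (B_max (i', j')).
apply: opnorm_eq_col (ab_ge0 _) _ _ => //.
- move=> x; rewrite lpnorm1E //=; apply: bigmax_le => [|i' _].
    by rewrite mulr_ge0 ?sumr_ge0.
  apply: le_trans (ab_mulmx _ _ _) _; rewrite mulr_sumr.
  by apply: ler_sum => j' _; apply: ler_wpM2r => //; exact: (B_max (i', j')).
- apply/le_anti/andP; split; last exact: (le_bigmax _ (fun i' => ab (B i' j0)) i0).
  by apply: bigmax_le => // i' _; exact: (B_max (i', j0)).
Qed.

Section IsolatedMax.
Context (n m : nat) (A : 'M[F]_(n, m)).
Local Notation rho := (opnorm ab A 1%:E +oo%E).
Local Notation c := (opnorm ab (dropmax ab A rho) 1%:E +oo%E).
Hypothesis isolated : forall i j, ab (A i j) = rho ->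
  (forall j', j' != j -> A i j' = 0) /\ (forall i', i' != i -> A i' j = 0).
Variables (i0 : 'I_n) (j0 : 'I_m).
Hypotheses (rhoE : rho = ab (A i0 j0)) (le_rho : forall i j, ab (A i j) <= rho)
  (rho_gt0 : 0 < rho).

Let m_gt0 : (0 < m)%N. Proof. exact: leq_ltn_trans (leq0n _) (ltn_ord j0). Qed.
Let n_gt0 : (0 < n)%N. Proof. exact: leq_ltn_trans (leq0n _) (ltn_ord i0). Qed.

Lemma dropmax_norm_bounds : 0 <= c /\ c < rho.
Proof.
have [i1 [j1 [-> _]]] := opnorm_1oo_max (dropmax ab A rho) i0 j0.
rewrite mxE; case: eqP => [_ | /eqP ne]; rewrite ?ab0 ?lexx //.
by rewrite ab_ge0 lt_neqAle ne le_rho.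
Qed.

Lemma le_dropmax_norm i j : ab (A i j) != rho -> ab (A i j) <= c.
Proof.
have [i1 [j1 [-> C_max]]] := opnorm_1oo_max (dropmax ab A rho) i0 j0.
by move=> ne; have := C_max i j; rewrite !mxE (negbTE ne).
Qed.

Lemma opnorm_isolated_max (r : R) (s : \bar R) : 1 <= r -> (r%:E <= s)%E ->
  m%:R `^ (1 - r^-1) * n%:R `^ einv s * c <= rho -> opnorm ab A r%:E s = rho.
Proof.
move=> r1 rs le_factor; have r0 : (0 < r%:E)%E by rewrite lte_fin (lt_le_trans ltr01).
have [c_ge0 _] := dropmax_norm_bounds.
have max_row i j j' : ab (A i j) = rho -> j' != j -> ab (A i j') = 0.
  by move=> /isolated[row0 _] /row0 ->.
have max_col i j i' : ab (A i j) = rho -> i' != i -> ab (A i' j) = 0.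
  by move=> /isolated[_ col0] /col0 ->.
apply: (opnorm_eq_col (j0 := j0) r0 (ltW rho_gt0)).
  move=> x; apply: (lpnorm_le_rho rho_gt0 c_ge0 max_row max_col) => // i.
  - exact: le_dropmax_norm.
  - exact: ab_mulmx.
have -> : (fun i => ab (A i j0)) = fun i => if i == i0 then rho else 0.
  apply/funext => i; case: eqP => [-> // | /eqP ne].
  by rewrite ((isolated (esym rhoE)).2 i ne) ab0.
by rewrite lpnorm_delta ?(lt_le_trans r0 rs) ?(ltW rho_gt0).
Qed.

Lemma E1inf_isolated_max (p : \bar R) (q : R) :
  (1%:E < p)%E -> 1 <= q -> (p <= q%:E)%E ->
  m%:R `^ (1 - einv p) * n%:R `^ q^-1 * c <= rho -> E1inf ab p q A.
Proof.
case: p => [p||] p1 q1 pq le_factor r s r1 rp qs; last 2 first.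
- by rewrite leye_eq in pq.
- by rewrite ltNge leNye in p1.
rewrite lte_fin in p1; rewrite lte_fin in rp; rewrite lee_fin in pq.
have q0 := lt_le_trans ltr01 q1.
have [c_ge0 _] := dropmax_norm_bounds.
have -> : opnorm ab A p%:E q%:E = rho.
  by apply: (opnorm_isolated_max (ltW p1)); [rewrite lee_fin | exact: le_factor].
apply: (opnorm_isolated_max r1).
  by apply: (le_trans _ (ltW qs)); rewrite lee_fin; exact: le_trans (ltW rp) pq.
apply: le_trans le_factor; rewrite ler_wpM2r // powR_exponents_le ?ler1n ?m_gt0 ?n_gt0 //.
- exact: lt_le_trans ltr01 r1.
- exact: ltW.
- exact: einv_le.
Qed.

Lemma dropmax_factor_small : exists p0 : R, 1 < p0 /\ exists q0 : R,
  forall p q : R, 1 < p -> p <= p0 -> q0 <= q ->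
    m%:R `^ (1 - p^-1) * n%:R `^ q^-1 * c <= rho.
Proof.
have [c_ge0 c_lt_rho] := dropmax_norm_bounds.
have [c0|c_neq0] := eqVneq c 0.
  exists 2; split; first by rewrite ltr1n.
  by exists 1 => p q _ _ _; rewrite c0 mulr0 ltW.
have c_gt0 : 0 < c by rewrite lt0r c_neq0.
have := @powR_exponents_small R m%:R n%:R (rho / c).
rewrite !ler1n m_gt0 n_gt0 ltr_pdivlMr // mul1r => /(_ isT isT c_lt_rho).
move=> [p0 [p01 [q0 small]]]; exists p0; split => //; exists q0 => p q p1 pp0 qq0.
by rewrite -ler_pdivlMr //; exact: small.
Qed.

End IsolatedMax.

Lemma Thm6_0 n m : Thm6 ab (0 : 'M[F]_(n, m)).
Proof.
have C0 rho : dropmax ab (0 : 'M[F]_(n, m)) rho = 0.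
  by apply/matrixP => i j; rewrite !mxE; case: ifP.
rewrite /Thm6; cbv zeta; rewrite C0 !opnorm0 ?ltry // => _; split.
  move=> p q _ q1 _ _ r s _ _ qs.
  have q0 : (0 < q%:E)%E by rewrite lte_fin (lt_le_trans ltr01).
  by rewrite !opnorm0 // (lt_trans q0 qs).
exists 2; split; first by rewrite ltr1n.
by exists 1 => p q _ _ _; rewrite mulr0.
Qed.

Lemma Thm6_abs n m (A : 'M[F]_(n, m)) : Thm6 ab A.
Proof.
have [->|A_neq0] := eqVneq A 0; first exact: Thm6_0.
have [i [j Aij]] : exists i j, A i j != 0.
  case: (pickP (fun k : 'I_n * 'I_m => A k.1 k.2 != 0)) => [[i j] Aij | A0].
    by exists i, j.
  case/eqP: A_neq0; apply/matrixP => i j; rewrite mxE.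
  by apply/eqP/negbFE/(A0 (i, j)).
have [i0 [j0 [rhoE A_max]]] := opnorm_1oo_max A i j.
have le_rho i' j' : ab (A i' j') <= opnorm ab A 1%:E +oo%E by rewrite rhoE A_max.
have rho_gt0 : 0 < opnorm ab A 1%:E +oo%E.
  rewrite (lt_le_trans _ (le_rho i j)) // lt0r ab_ge0 andbT.
  by apply: contra Aij => /eqP/ab_eq0 ->.
rewrite /Thm6; cbv zeta => isolated; split.
  move=> p q; exact (E1inf_isolated_max isolated rhoE le_rho rho_gt0 (p := p) (q := q)).
exact: dropmax_factor_small i0 j0 le_rho rho_gt0.
Qed.

End AbsoluteValue.

Theorem mainTheorem6 (R : realType) (n m : nat) :
  (forall A : 'M[R]_(n, m), Thm6 (@absR R) A) /\
  (forall A : 'M[R[i]]_(n, m), Thm6 (@absC R) A).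
Proof.
split => A; apply: Thm6_abs.
- exact: normr0.
- exact: normr1.
- exact: normr_ge0.
- exact: ler_normD.
- exact: normrM.
- by move=> x /normr0_eq0.
- exact: Normc.normc0.
- exact: Normc.normc1.
- by move=> [a b]; rewrite /absC /Normc.normc sqrtr_ge0.
- exact: le_normcD.
- exact: Normc.normcM.
- exact: Normc.eq0_normc.
Qed.
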